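(* Let $X$ be any Tychonoff space and let $E$ be a Banach space. Then every sequentially continuous linear operator $T:C_p(X)\to E_w$ has a finite-dimensional range.
   Context: For a Tychonoff space $X$, $C_p(X)$ denotes the space of all continuous real-valued functions on $X$ with the topology of pointwise convergence. For a Banach space $E$, $E_w$ denotes $E$ endowed with its weak topology $\sigma(E,E')$. A map between topological spaces is sequentially continuous if it sends convergent sequences to convergent sequences (with the corresponding limits). *)

From HB Require Import structures.
From mathcomp Require Import all_boot all_order all_algebra.
From mathcomp Require Import all_classical all_reals all_analysis.
Set Implicit Arguments. Unset Strict Implicit. Unset Printing Implicit Defensive.
Import Order.TTheory GRing.Theory Num.Theory.
Import numFieldNormedType.Exports.
Local Open Scope classical_set_scope.
Local Open Scope ring_scope.

Definition tychonoff_space (X : topologicalType) : Prop :=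
  accessible_space X /\ completely_regular_space X.

Definition dual_functional (R : realType) (E : normedModType R) (phi : E -> R) : Prop :=
  (forall (a : R) (x y : E), phi (a *: x + y) = a * phi x + phi y) /\ continuous phi.

(* Convergence of a sequence in E_w = (E, sigma(E,E')): convergence of the
   images under every element of E' (definition of the weak topology as the
   initial topology induced by E'). *)
Definition weak_cvg (R : realType) (E : normedModType R) (s : nat -> E) (y : E) : Prop :=
  forall phi : E -> R, dual_functional phi -> (phi \o s) @ \oo --> phi y.

From HB Require Import structures.
From mathcomp Require Import all_boot all_order all_algebra.
From mathcomp Require Import all_classical all_reals all_analysis.
From mathcomp Require Import ring lra.
Set Implicit Arguments. Unset Strict Implicit. Unset Printing Implicit Defensive.
Import Order.TTheory GRing.Theory Num.Theory.
Import numFieldNormedType.Exports.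
Local Open Scope classical_set_scope.
Local Open Scope ring_scope.

(* Call [S : set X] negligible when [T] kills every continuous function
   supported in [S].  The analytic core is that [T (h n)] cannot be nonzero
   for all [n] when the [h n] vanish eventually at every point: a
   gliding-hump series of Hahn-Banach functionals gives one continuous
   functional [phi] with [phi (T (h n)) != 0] for all [n], and
   [h n / phi (T (h n))] tends to [0] pointwise while [phi] maps its images
   to [1].  On an atom (a set admitting no two disjoint non-negligible
   subsets) [T g] is then a multiple of [T p] for a fixed [p], the factor
   being the level [c] such that [g > (c + d) p] and [g < (c - d) p] are
   negligible for all [d > 0].  If [T] had infinite rank, non-atomicity would
   let us split off, again and again, a non-negligible piece disjoint from a
   remaining part of infinite rank; the resulting disjointly supported [h n]
   with [T (h n) != 0] contradict the core fact. *)

(** * Hahn-Banach *)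

Section HahnBanach.
Context (R : realType) (E : normedModType R).
Implicit Types (D : set E) (f : E -> R).

Definition linear_subspace D :=
  D 0 /\ forall (a : R) x z, D x -> D z -> D (a *: x + z).

Definition norm_dominated_on D f :=
  [/\ linear_subspace D,
      (forall (a : R) x z, D x -> D z -> f (a *: x + z) = a * f x + f z) &
      (forall x, D x -> f x <= `|x|)].

Lemma linear_subspaceZ D (a : R) x : linear_subspace D -> D x -> D (a *: x).
Proof. by case=> D0 DD Dx; have := DD a x 0 Dx D0; rewrite addr0. Qed.

Lemma linear_subspaceB D x z : linear_subspace D -> D x -> D z -> D (z - x).
Proof. by case=> _ DD Dx Dz; have := DD (-1) x z Dx Dz; rewrite scaleN1r addrC. Qed.

Lemma norm_dominated_on0 D f : norm_dominated_on D f -> f 0 = 0.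
Proof.
case=> [[D0 _] lin _]; have := lin (-1) 0 0 D0 D0.
by rewrite scaler0 addr0 mulN1r addNr.
Qed.

Lemma norm_dominated_onZ D f (a : R) x :
  norm_dominated_on D f -> D x -> f (a *: x) = a * f x.
Proof.
move=> Df Dx; have f0 := norm_dominated_on0 Df.
by case: Df => [[D0 _] lin _]; have := lin a x 0 Dx D0; rewrite addr0 f0 addr0.
Qed.

Section OneStepExtension.
Variables (D : set E) (f : E -> R) (z : E).
Hypotheses (Df : norm_dominated_on D f) (Dz : ~ D z).

Definition add_line : set E := [set w | exists xt : E * R, D xt.1 /\ w = xt.1 + xt.2 *: z].

Definition line_extension (c : R) (w : E) : R :=
  if pselect (exists xt : E * R, D xt.1 /\ w = xt.1 + xt.2 *: z) is left H
  then let xt := projT1 (cid H) in f xt.1 + xt.2 * c else 0.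

Lemma add_line_uniq x x' t t' :
  D x -> D x' -> x + t *: z = x' + t' *: z -> x = x' /\ t = t'.
Proof.
move=> Dx Dx' e; suff tt' : t = t' by split => //; move: e; rewrite tt' => /addIr.
apply: contra_notP Dz => /eqP; rewrite -subr_eq0 => tt'.
have -> : z = (t - t')^-1 *: (x' - x).
  apply: (@scalerI _ _ (t - t')) => //; rewrite scalerA mulfV // scale1r scalerBl.
  by apply/eqP; rewrite subr_eq eq_sym addrAC subr_eq [t *: z + x]addrC -e.
by case: Df => DD _ _; apply: linear_subspaceZ => //; exact: linear_subspaceB.
Qed.

Lemma line_extensionE c x t : D x -> line_extension c (x + t *: z) = f x + t * c.
Proof.
move=> Dx; rewrite /line_extension; case: pselect => [H|[]]; last by exists (x, t).
case: (cid H) => [[x' t'] /= [Dx' e]] /=.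
by have [-> ->] := add_line_uniq Dx Dx' e.
Qed.

Lemma line_extension_eq c x : D x -> line_extension c x = f x.
Proof. by move=> Dx; have := line_extensionE c 0 Dx; rewrite scale0r addr0 mul0r addr0. Qed.

Lemma line_extension_dir c : line_extension c z = c.
Proof.
case: (Df) => [[D0 _] _ _]; have := line_extensionE c 1 D0.
by rewrite scale1r add0r (norm_dominated_on0 Df) mul1r add0r.
Qed.

Lemma add_line_sup : D `<=` add_line.
Proof. by move=> x Dx; exists (x, 0); rewrite /= scale0r addr0. Qed.

Lemma add_line_dir : add_line z.
Proof. by case: Df => [[D0 _] _ _]; exists (0, 1); rewrite /= scale1r add0r. Qed.

(* The bounds on [c] are the dominance [f (x + t z) + t c <= |x + t z|],
   divided by [|t|], for [t > 0] and [t < 0]. *)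
Lemma line_extension_dominated c :
  (forall x, D x -> f x - `|x - z| <= c) -> (forall x, D x -> c <= `|x + z| - f x) ->
  norm_dominated_on add_line (line_extension c).
Proof.
move=> clo chi; case: (Df) => [[D0 DD] lin bnd]; split.
- split; first by exists (0, 0); rewrite /= scale0r addr0.
  move=> a _ _ [[x t] /= [Dx ->]] [[x' t'] /= [Dx' ->]].
  exists (a *: x + x', a * t + t'); split; first exact: DD.
  by rewrite /= scalerDr scalerA scalerDl addrACA.
- move=> a _ _ [[x t] /= [Dx ->]] [[x' t'] /= [Dx' ->]].
  have -> : a *: (x + t *: z) + (x' + t' *: z) = (a *: x + x') + (a * t + t') *: z.
    by rewrite scalerDr scalerA scalerDl addrACA.
  rewrite !line_extensionE ?lin //; last exact: DD.
  by rewrite mulrDl mulrDr mulrA addrACA.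
- move=> _ [[x t] /= [Dx ->]]; rewrite line_extensionE //.
  have [t0|t0|->] := ltgtP t 0; last by rewrite mul0r addr0 scale0r addr0 bnd.
  + have nt0 : 0 < - t by rewrite oppr_gt0.
    have Dx' : D ((- t)^-1 *: x) by exact: linear_subspaceZ.
    have := clo _ Dx'; rewrite (norm_dominated_onZ _ Df Dx) -(ler_pM2l nt0).
    rewrite mulrBr mulrA mulfV ?gt_eqF // mul1r.
    rewrite -[X in X * `|_|]gtr0_norm // -normrZ scalerBr scalerA.
    by rewrite mulfV ?gt_eqF // scale1r scaleNr opprK; lra.
  + have Dx' : D (t^-1 *: x) by exact: linear_subspaceZ.
    have := chi _ Dx'; rewrite (norm_dominated_onZ _ Df Dx) -(ler_pM2l t0).
    rewrite mulrBr mulrA mulfV ?gt_eqF // mul1r.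
    rewrite -[X in X * `|_|]gtr0_norm // -normrZ scalerDr scalerA.
    by rewrite mulfV ?gt_eqF // scale1r; lra.
Qed.

(* A valid [c] exists because [f x + f x' <= |x + x'| <= |x - z| + |x' + z|]. *)
Lemma line_extension_constant : exists c,
  (forall x, D x -> f x - `|x - z| <= c) /\ (forall x, D x -> c <= `|x + z| - f x).
Proof.
case: (Df) => [[D0 DD] lin bnd].
have sep x x' : D x -> D x' -> f x - `|x - z| <= `|x' + z| - f x'.
  move=> Dx Dx'; have := bnd _ (DD 1 x x' Dx Dx'); rewrite lin // mul1r scale1r.
  have : `|x + x'| <= `|x - z| + `|x' + z|.
    by rewrite -[x + x']addr0 -(addNr z) addrACA ler_normD.
  lra.
pose S := [set f x - `|x - z| | x in D].
have supS : has_sup S.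
  by split; [exists (f 0 - `|0 - z|), 0 | exists (`|0 + z| - f 0) => _ [x Dx <-]; exact: sep].
exists (sup S); split => [x Dx|x' Dx']; first by apply: ub_le_sup; [case: supS | exists x].
by apply: ge_sup => [|_ [x Dx <-]]; [case: supS|exact: sep].
Qed.

End OneStepExtension.

Section MaximalExtension.
Variable y : E.

Definition norming_partial :=
  {p : set E * (E -> R) | norm_dominated_on p.1 p.2 /\ p.1 y /\ p.2 y = `|y|}.

Definition extends (s t : norming_partial) : bool :=
  `[< (sval s).1 `<=` (sval t).1 /\ forall x, (sval s).1 x -> (sval t).2 x = (sval s).2 x >].

Lemma extends_chain_ub (A : set norming_partial) : A !=set0 ->
  total_on A extends -> exists t, forall s, A s -> extends s t.
Proof.
move=> [s0 As0] totA.
pose DU x := exists2 s, A s & (sval s).1 x.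
pose fU x := if pselect (exists2 s, A s & (sval s).1 x) is left H
  then (sval (projT1 (cid2 H))).2 x else 0.
have fUE s x : A s -> (sval s).1 x -> fU x = (sval s).2 x.
  move=> As sx; rewrite /fU; case: pselect => [H|[]]; last by exists s.
  case: (cid2 H) => s' As' s'x /=.
  by have [/asboolP [_ ->]|/asboolP [_ ->]] := totA _ _ As As'.
have join s s' : A s -> A s' ->
    exists2 t, A t & (sval s).1 `<=` (sval t).1 /\ (sval s').1 `<=` (sval t).1.
  move=> As As'; have [/asboolP [h _]|/asboolP [h _]] := totA _ _ As As'.
    by exists s' => //; split.
  by exists s => //; split.
have DUf : norm_dominated_on DU fU.
  split.
  - split; first by exists s0 => //; case: (svalP s0) => [[[]]].
    move=> a x z [s As sx] [s' As' s'z]; have [t At [st s't]] := join _ _ As As'.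
    by exists t => //; case: (svalP t) => [[[_ DD] _ _] _]; apply: DD; [exact: st|exact: s't].
  - move=> a x z [s As sx] [s' As' s'z]; have [t At [st s't]] := join _ _ As As'.
    have tx := st _ sx; have tz := s't _ s'z.
    case: (svalP t) => [[[_ DD] lin _] _].
    by rewrite !(fUE t) //; [exact: lin | exact: DD].
  - move=> x [s As sx]; rewrite (fUE s) //.
    by case: (svalP s) => [[_ _ bnd] _]; exact: bnd.
have DUy : DU y by exists s0 => //; case: (svalP s0) => _ [].
have fUy : fU y = `|y| by rewrite (fUE s0) //; case: (svalP s0) => _ [].
exists (exist _ (DU, fU) (conj DUf (conj DUy fUy))) => s As.
by apply/asboolP; split => /= x sx; [exists s | rewrite (fUE s)].
Qed.

Lemma norming_partial_inhabited : y != 0 -> inhabited norming_partial.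
Proof.
move=> y0.
have Df : norm_dominated_on [set 0] (fun=> 0).
  split => //=; last by move=> a x z _ _; rewrite mulr0 addr0.
  by split => // a x z -> ->; rewrite scaler0 addr0.
have Dy : ~ [set 0 : E] y by move=> /= e; rewrite e eqxx in y0.
have Dext : norm_dominated_on (add_line [set 0] y) (line_extension [set 0] (fun=> 0) y `|y|).
  apply: (line_extension_dominated Df Dy) => x /= ->; rewrite ?add0r ?sub0r ?normrN ?subr0 //.
  by have := normr_ge0 y; lra.
constructor; exists (add_line [set 0] y, line_extension [set 0] (fun=> 0) y `|y|).
by split; [exact: Dext | split; [exact: (add_line_dir y Df) | exact: line_extension_dir]].
Qed.

Lemma norming_total_extension : exists psi : E -> R,
  norm_dominated_on setT psi /\ psi y = `|y|.
Proof.
have [->|y0] := eqVneq y 0.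
  exists (fun=> 0); rewrite normr0; split => //.
  by split => // a x z _ _; rewrite mulr0 addr0.
have [s0] := norming_partial_inhabited y0.
have [| |A totA|[[D f] [Df [Dy fy]]] maxm] := @ZL_preorder _ s0 extends.
- by move=> s; apply/asboolP; split.
- move=> r s t /asboolP [rs1 rs2] /asboolP [st1 st2]; apply/asboolP.
  by split => [|x rx]; [exact: subset_trans st1 | rewrite st2 ?rs2 //; exact: rs1].
- have [An0|A0] := pselect (A !=set0); first exact: extends_chain_ub.
  by exists s0 => s As; exfalso; apply: A0; exists s.
suff DT : D = setT by subst D; exists f.
apply/seteqP; split => // z _; apply: contrapT => Dz.
have [c [clo chi]] := line_extension_constant z Df.
pose m : norming_partial := exist _ (add_line D z, line_extension D f z c)
  (conj (line_extension_dominated Df Dz clo chi)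
        (conj (add_line_sup _ Dy) (etrans (line_extension_eq Df Dz c Dy) fy))).
have /maxm /asboolP [mD _] : extends (exist _ (D, f) (conj Df (conj Dy fy))) m.
  by apply/asboolP; split => /= x Dx; [exact: add_line_sup | exact: (line_extension_eq Df Dz)].
exact/Dz/mD/(add_line_dir z Df).
Qed.

End MaximalExtension.

Lemma norming_functional (y : E) : exists psi : E -> R,
  [/\ dual_functional psi, forall x, `|psi x| <= `|x| & psi y = `|y|].
Proof.
have [psi [[_ lin bnd] psiy]] := norming_total_extension y.
have psiB x z : psi (x - z) = psi x - psi z.
  by have := lin (-1) z x I I; rewrite scaleN1r mulN1r addrC => ->; rewrite addrC.
have psi_norm x : `|psi x| <= `|x|.
  have psiN : psi (- x) = - psi x.
    by rewrite -sub0r psiB; have := psiB 0 0; rewrite !subrr => ->; rewrite sub0r.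
  by rewrite ler_norml bnd // andbT lerNl -psiN -(normrN x) bnd.
exists psi; split => //; split => [a x z|x]; first exact: lin.
apply/cvgrPdist_lt => e e0; near=> w.
by rewrite -psiB (le_lt_trans (psi_norm _)) //; near: w; apply: cvgr_dist_lt.
Unshelve. all: by end_near. Qed.

End HahnBanach.

(** * A continuous functional not vanishing on a sequence *)

Section DualFunctional.
Context (R : realType) (E : normedModType R) (phi : E -> R).
Hypothesis phi_dual : dual_functional phi.

Lemma dual_functionalB x z : phi (x - z) = phi x - phi z.
Proof.
by case: phi_dual => lin _; have := lin (-1) z x; rewrite scaleN1r mulN1r !(addrC (- _)).
Qed.

Lemma dual_functional0 : phi 0 = 0.
Proof. by have := dual_functionalB 0 0; rewrite !subrr. Qed.

Lemma dual_functionalZ (a : R) x : phi (a *: x) = a * phi x.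
Proof. by case: phi_dual => lin _; have := lin a x 0; rewrite !addr0 dual_functional0 addr0. Qed.

End DualFunctional.

Lemma dual_functional_bounded (R : realType) (E : normedModType R) (phi : E -> R) (C : R) :
  0 < C -> (forall (a : R) x z, phi (a *: x + z) = a * phi x + phi z) ->
  (forall x, `|phi x| <= C * `|x|) -> dual_functional phi.
Proof.
move=> C0 lin bnd; split => // x; apply/cvgrPdist_lt => e e0; near=> w.
have := lin (-1) w x; rewrite scaleN1r mulN1r addrC [- _ + _]addrC => <-.
rewrite (le_lt_trans (bnd _)) // -ltr_pdivlMl //.
by near: w; apply: cvgr_dist_lt; rewrite ?divr_gt0 ?mulr_gt0 ?invr_gt0.
Unshelve. all: by end_near. Qed.

Lemma dual_separates (R : realType) (E : normedModType R) (y : E) :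
  (forall phi : E -> R, dual_functional phi -> phi y = 0) -> y = 0.
Proof.
move=> yker; have [psi [psi_dual _ psiy]] := norming_functional y.
by apply/normr0_eq0; rewrite -psiy yker.
Qed.

Lemma prefix_recursion (T : Type) (P : seq T -> Prop) :
  P [::] -> (forall s, P s -> exists x, P (rcons s x)) ->
  exists a : nat -> T, forall n, P (mkseq a n).
Proof.
move=> P0 Prcons; have [x0 _] := Prcons _ P0.
have /choice [next Pnext] : forall s, exists x, P s -> P (rcons s x).
  move=> s; have [/Prcons [x Px]|Ps] := pselect (P s); first by exists x.
  by exists x0.
pose L k := iter k (fun s => rcons s (next s)) [::].
have sizeL k : size (L k) = k by elim: k => //= k IH; rewrite size_rcons IH.
exists (fun i => nth x0 (L i.+1) i).
suff mkseqL n : mkseq (fun i => nth x0 (L i.+1) i) n = L n.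
  by move=> n; rewrite mkseqL; elim: n => //= n; exact: Pnext.
by elim: n => // n IH; rewrite mkseqS IH /= nth_rcons sizeL ltnn eqxx.
Qed.

Section GlidingHump.
Context (R : realType) (E : normedModType R) (y : nat -> E) (psi : nat -> E -> R).
Hypotheses (y_neq0 : forall n, y n != 0) (psi_dual : forall n, dual_functional (psi n))
  (psi_norm : forall n x, `|psi n x| <= `|x|) (psi_y : forall n, psi n (y n) = `|y n|).

Let w (m : nat) : R := 2^-1 ^+ m.

Let w_gt0 m : 0 < w m.
Proof. by rewrite exprn_gt0. Qed.

Let sum_w_le2 m n : \sum_(m <= i < n) w i <= 2.
Proof.
have [mn|nm] := leqP m n; last by rewrite big_geq // ltnW.
apply: le_trans (_ : \sum_(0 <= i < n) w i <= 2).
  rewrite (big_cat_nat (leq0n m) mn) /= lerDr.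
  by apply: sumr_ge0 => i _; exact: ltW.
have -> : \sum_(0 <= i < n) w i = series (geometric 1 2^-1) n.
  by apply: eq_bigr => i _; rewrite /geometric /= mul1r.
have half : 1 - 2^-1 = 2^-1 :> R by rewrite {1}(splitr 1) mul1r addrK.
apply: le_trans (geometric_le_lim _ ler01 _ _) _; rewrite ?half ?div1r ?invrK //.
by rewrite ger0_norm // invf_lt1 // ltr1n.
Qed.

Definition hump_sum (a : nat -> R) j := \sum_(0 <= i < j.+1) a i * psi i (y j).

(* By the third condition, coefficient [i] moves [phi (y j)] for
   [phi := sum_i a_i psi_i] by at most [2^-i |hump_sum a j| / 4], so all the
   later coefficients together move it by at most half of [|hump_sum a j|]. *)
Definition hump_prefix (s : seq R) :=
  [/\ forall i, (i < size s)%N -> `|s`_i| <= w i,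
      forall j, (j < size s)%N -> hump_sum (nth 0 s) j != 0 &
      forall j i, (j < i < size s)%N ->
        `|s`_i| * `|y j| <= `|hump_sum (nth 0 s) j| * w i / 4].

Lemma hump_sum_rcons s c j :
  (j < size s)%N -> hump_sum (nth 0 (rcons s c)) j = hump_sum (nth 0 s) j.
Proof.
move=> js; apply: eq_big_nat => i /andP [_ ij].
by rewrite nth_rcons (leq_trans ij js).
Qed.

Lemma hump_prefix_rcons s : hump_prefix s -> exists c, hump_prefix (rcons s c).
Proof.
case=> bnd nz small; set m := size s.
pose b j := `|hump_sum (nth 0 s) j| * w m / 4 / `|y j|.
set t := \big[Num.min/w m]_(j < m) b j.
have t_gt0 : 0 < t.
  apply: lt_bigmin => // j _; rewrite !divr_gt0 ?normr_gt0 ?mulr_gt0 //.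
  by rewrite normr_gt0 nz.
have tw : t <= w m by rewrite bigmin_le_id.
have tb j : (j < m)%N -> t <= b j by move=> jm; exact: (bigmin_le _ (Ordinal jm)).
set s0 := \sum_(0 <= i < m) s`_i * psi i (y m).
have sum_m c : hump_sum (nth 0 (rcons s c)) m = s0 + c * `|y m|.
  rewrite /hump_sum big_nat_recr //= nth_rcons ltnn eqxx psi_y; congr (_ + _).
  by apply: eq_big_nat => i /andP [_ im]; rewrite nth_rcons im.
have ym_gt0 : 0 < `|y m| by rewrite normr_gt0.
pose c := if s0 + t * `|y m| != 0 then t else t / 2.
have c_gt0 : 0 < c by rewrite /c; case: ifP => _ //; rewrite divr_gt0.
have ct : c <= t by rewrite /c; case: ifP => _ //; lra.
have sum_c : s0 + c * `|y m| != 0.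
  rewrite /c; case: ifP => // /negbFE /eqP s0t.
  have -> : s0 + t / 2 * `|y m| = - (t / 2 * `|y m|) by lra.
  by rewrite oppr_eq0 mulf_neq0 ?gt_eqF ?divr_gt0.
exists c; split; rewrite size_rcons.
- move=> i; rewrite ltnS leq_eqVlt => /orP [/eqP ->|im].
    by rewrite nth_rcons ltnn eqxx gtr0_norm //; exact: le_trans tw.
  by rewrite nth_rcons im; exact: bnd.
- move=> j; rewrite ltnS leq_eqVlt => /orP [/eqP ->|jm]; first by rewrite sum_m.
  by rewrite hump_sum_rcons //; exact: nz.
- move=> j i /andP [ji]; rewrite ltnS leq_eqVlt => /orP [/eqP ei|im].
    subst i; rewrite nth_rcons ltnn eqxx hump_sum_rcons // gtr0_norm //.
    by rewrite -ler_pdivlMr ?normr_gt0 //; apply: le_trans ct (tb _ ji).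
  rewrite nth_rcons im hump_sum_rcons ?(ltn_trans ji) //.
  by apply: small; rewrite ji.
Qed.

Lemma hump_coefficients : exists a : nat -> R, [/\ forall i, `|a i| <= w i,
  forall j, hump_sum a j != 0 &
  forall j i, (j < i)%N -> `|a i| * `|y j| <= `|hump_sum a j| * w i / 4].
Proof.
have [|a Pa] := @prefix_recursion _ hump_prefix _ hump_prefix_rcons.
  by split => // j i; rewrite andbF.
have nthE n i : (i < n)%N -> (mkseq a n)`_i = a i by move=> ?; rewrite nth_mkseq.
have sumE n j : (j < n)%N -> hump_sum (nth 0 (mkseq a n)) j = hump_sum a j.
  by move=> jn; apply: eq_big_nat => i /andP [_ ij]; rewrite nthE // (leq_trans ij).
exists a; split => [i|j|j i ji].
- by case: (Pa i.+1) => + _ _ => /(_ i); rewrite size_mkseq nthE // => ->.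
- by case: (Pa j.+1) => _ + _ => /(_ j); rewrite size_mkseq sumE // => ->.
- have ji1 : (j < i.+1)%N by rewrite ltnS ltnW.
  by case: (Pa i.+1) => _ _ /(_ j i); rewrite size_mkseq ji ltnSn nthE // sumE //; apply.
Qed.

Section HumpFunctional.
Variable a : nat -> R.
Hypotheses (a_le : forall i, `|a i| <= w i) (a_sum_neq0 : forall j, hump_sum a j != 0)
  (a_small : forall j i, (j < i)%N -> `|a i| * `|y j| <= `|hump_sum a j| * w i / 4).

Let term x i := a i * psi i x.

Let term_le x i : `|term x i| <= `|x| * w i.
Proof. by rewrite normrM mulrC ler_pM. Qed.

Let series_term_cvg x : cvgn (series (term x)).
Proof.
apply: normed_cvg; apply: (@series_le_cvg _ _ (geometric `|x| 2^-1)) => // n.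
- exact: normr_ge0.
- by rewrite /geometric /= mulr_ge0 // exprn_ge0.
- exact: term_le.
- by apply: is_cvg_geometric_series; rewrite ger0_norm // invf_lt1 // ltr1n.
Qed.

Definition hump_functional x := limn (series (term x)).

Let hump_functionalE x : series (term x) @ \oo --> hump_functional x.
Proof. exact: series_term_cvg. Qed.

Lemma hump_functional_dual : dual_functional hump_functional.
Proof.
apply: (@dual_functional_bounded _ _ _ 2) => // [b x z|x].
  apply: cvg_lim => //.
  have -> : series (term (b *: x + z)) =
      (fun n => b * series (term x) n + series (term z) n).
    apply/funext => n; rewrite /series /= mulr_sumr -big_split /=.
    by apply: eq_bigr => i _; rewrite /term (proj1 (psi_dual i)) mulrDr mulrCA.
  by apply: cvgD; [apply: cvgMr|]; exact: hump_functionalE.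
apply: (cvgr_to_le (cvg_norm (@hump_functionalE x))); near=> n.
apply: le_trans (ler_norm_sum _ _ _) _.
apply: le_trans (ler_sum _ (fun i _ => term_le x i)) _.
by rewrite -mulr_sumr mulrC ler_wpM2r.
Unshelve. all: by end_near. Qed.

(* The later coefficients move [hump_functional (y j)] away from
   [hump_sum a j] by at most half of its modulus. *)
Lemma hump_functional_neq0 j : hump_functional (y j) != 0.
Proof.
set S := hump_sum a j.
have near_S : `|hump_functional (y j) - S| <= `|S| / 2.
  apply: (cvgr_to_le (cvg_norm (cvgB (@hump_functionalE (y j)) (cvg_cst S)))).
  near=> n; have jn : (j.+1 <= n)%N by near: n; exists j.+1.
  rewrite /series /= !fctE (big_cat_nat (leq0n j.+1) jn) /= addrAC subrr add0r.
  apply: le_trans (ler_norm_sum _ _ _) _.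
  apply: (@le_trans _ _ (\sum_(j.+1 <= i < n) `|S| / 4 * w i)).
    apply: ler_sum_nat => i /andP [ji _]; rewrite /term normrM.
    apply: le_trans (_ : `|a i| * `|y j| <= _); first by rewrite ler_wpM2l.
    by rewrite mulrAC; exact: a_small.
  rewrite -mulr_sumr; have := sum_w_le2 j.+1 n; have := normr_ge0 S.
  by move=> S0 w2; rewrite (le_trans (ler_wpM2l _ w2)) ?divr_ge0 //; lra.
apply/eqP => phi0; move: near_S; rewrite phi0 sub0r normrN.
by have := a_sum_neq0 j; rewrite -normr_gt0 -/S; lra.
Unshelve. all: by end_near. Qed.

End HumpFunctional.

Lemma gliding_hump_functional :
  exists phi : E -> R, dual_functional phi /\ forall j, phi (y j) != 0.
Proof.
have [a [a_le a_neq0 a_small]] := hump_coefficients.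
exists (hump_functional a); split; first exact: hump_functional_dual.
exact: hump_functional_neq0.
Qed.

End GlidingHump.

Lemma dual_functional_avoiding (R : realType) (E : normedModType R) (y : nat -> E) :
  (forall n, y n != 0) -> exists phi : E -> R, dual_functional phi /\ forall j, phi (y j) != 0.
Proof.
move=> y_neq0; have /choice [psi psiP] := fun n => norming_functional (y n).
apply: (@gliding_hump_functional _ _ y psi) => // n; by case: (psiP n).
Qed.

(** * Sequentially continuous operators on C_p(X) *)

Section ContinuousFunctions.
Context (R : realType) (X : topologicalType).
Implicit Types f g : X -> R.

Lemma continuous_fun_add f g :
  continuous f -> continuous g -> continuous (fun x => f x + g x).
Proof. by move=> cf cg x; exact: (continuousD (cf x) (cg x)). Qed.

Lemma continuous_fun_opp f : continuous f -> continuous (fun x => - f x).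
Proof. by move=> cf x; exact: (continuousN (cf x)). Qed.

Lemma continuous_fun_mul f g :
  continuous f -> continuous g -> continuous (fun x => f x * g x).
Proof. by move=> cf cg x; exact: (continuousM (cf x) (cg x)). Qed.

Lemma continuous_fun_max f g :
  continuous f -> continuous g -> continuous (fun x => Num.max (f x) (g x)).
Proof. by move=> cf cg x; exact: (continuous_max (cf x) (cg x)). Qed.

Lemma continuous_fun_min f g :
  continuous f -> continuous g -> continuous (fun x => Num.min (f x) (g x)).
Proof. by move=> cf cg x; exact: (continuous_min (cf x) (cg x)). Qed.

Definition excess (c : R) f x := Num.max (f x - c) 0.

Lemma excess_continuous c f : continuous f -> continuous (excess c f).
Proof.
move=> cf; apply: continuous_fun_max; last exact: cst_continuous.
by apply: continuous_fun_add => //; exact: cst_continuous.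
Qed.

Definition supported_in (S : set X) f := forall x, ~ S x -> f x = 0.

Lemma supported_inP S f x : supported_in S f -> f x != 0 -> S x.
Proof. by move=> Sf fx; apply: contrapT => Sx; rewrite Sf ?eqxx in fx. Qed.

Lemma excess_supported c f : supported_in [set x | c < f x] (excess c f).
Proof. by move=> x /negP; rewrite -leNgt -subr_le0 /excess => /max_r. Qed.

Definition clamp01 (t : R) := Num.min (Num.max t 0) 1.

Lemma clamp01_le0 t : t <= 0 -> clamp01 t = 0.
Proof. by move=> t0; rewrite /clamp01 max_r // min_l. Qed.

Lemma clamp01_ge1 t : 1 <= t -> clamp01 t = 1.
Proof. by move=> t1; rewrite /clamp01 max_l ?min_r //; lra. Qed.

Lemma clamp01_continuous f : continuous f -> continuous (fun x => clamp01 (f x)).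
Proof.
move=> cf; apply: continuous_fun_min; last exact: cst_continuous.
by apply: continuous_fun_max => //; exact: cst_continuous.
Qed.

End ContinuousFunctions.

Ltac solve_continuous := repeat first
  [ assumption | apply: cst_continuous | apply: continuous_fun_add
  | apply: continuous_fun_opp | apply: continuous_fun_mul
  | apply: continuous_fun_max | apply: continuous_fun_min
  | apply: excess_continuous | apply: clamp01_continuous ].

Lemma ptws_cvg_near_eq (R : realType) (X : topologicalType) (u : nat -> X -> R) (f : X -> R) :
  (forall x, \forall n \near \oo, u n x = f x) -> {ptws, u @ \oo --> f}.
Proof. by move=> uf; apply/pointwise_cvgP => x; apply: cvg_near_cst; exact: uf. Qed.

Lemma ptws_cvg_dist_le (R : realType) (X : topologicalType) (u : nat -> X -> R) (f K : X -> R) :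
  (forall n x, `|f x - u n x| <= K x / n.+1%:R) -> {ptws, u @ \oo --> f}.
Proof.
move=> ufK; apply/pointwise_cvgP => x; apply/cvgrPdist_lt => e e0.
have /cvgr0_norm_lt/(_ e e0) : (fun n => K x * harmonic n) @ \oo --> 0.
  by rewrite -(mulr0 (K x)); apply: cvgMr; exact: cvg_harmonic.
by apply: filterS => n; apply: le_lt_trans; rewrite (le_trans (ufK n x)) ?ler_norm.
Qed.

Lemma nested_disjoint_eventually (X : Type) (O S : nat -> set X) :
  (forall n, [/\ O n.+1 `<=` O n, S n `<=` O n & forall x, S n x -> ~ O n.+1 x]) ->
  forall x, \forall n \near \oo, ~ S n x.
Proof.
move=> OS x; have [[n Snx]|nS] := pselect (exists n, S n x); last first.
  by exists 0%N => // n _ Snx; apply: nS; exists n.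
have On m : (n < m)%N -> O m `<=` O n.+1.
  elim: m => // m IH; rewrite ltnS leq_eqVlt => /orP [/eqP -> //|nm].
  by case: (OS m) => Om _ _ y /Om; exact: IH.
exists n.+1 => // m /= nm Smx; case: (OS n) => _ _ /(_ x Snx); apply.
by case: (OS m) => _ /(_ x Smx) Omx _; exact: On nm x Omx.
Qed.

Section SequentiallyContinuousOperator.
Context (R : realType) (X : topologicalType) (E : normedModType R) (T : (X -> R) -> E).
Hypothesis Tlin : forall (a : R) (f g : X -> R), continuous f -> continuous g ->
  T (a *: f + g) = a *: T f + T g.
Hypothesis Tseq : forall (u : nat -> X -> R) (f : X -> R),
  (forall n, continuous (u n)) -> continuous f ->
  {ptws, u @ \oo --> f} -> weak_cvg (T \o u) (T f).
Implicit Types (f g h p : X -> R) (S O U : set X).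

Let linfun (a : R) f g : a *: f + g = (fun x => a * f x + g x).
Proof. by []. Qed.

Lemma T0 : T (fun=> 0) = 0.
Proof.
have := Tlin (-1) (@cst_continuous X R 0) (@cst_continuous X R 0).
by rewrite linfun scaleN1r addNr mulr0 addr0.
Qed.

Lemma TD f g : continuous f -> continuous g -> T (fun x => f x + g x) = T f + T g.
Proof.
move=> cf cg; have := Tlin 1 cf cg; rewrite linfun scale1r.
by under eq_fun do rewrite mul1r.
Qed.

Lemma TZ (a : R) f : continuous f -> T (fun x => a * f x) = a *: T f.
Proof.
move=> cf; have := Tlin a cf (@cst_continuous X R 0); rewrite linfun T0 addr0.
by under eq_fun do rewrite addr0.
Qed.

Lemma TB f g : continuous f -> continuous g -> T (fun x => f x - g x) = T f - T g.
Proof.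
move=> cf cg; have TN : T (fun x => - g x) = - T g.
  by rewrite -scaleN1r -TZ //; congr T; apply/funext => x; rewrite mulN1r.
by rewrite (@TD f (fun x => - g x)) ?TN //; solve_continuous.
Qed.

Lemma T_ptws_cvg_cst (u : nat -> X -> R) f v : (forall n, continuous (u n)) -> continuous f ->
  {ptws, u @ \oo --> f} -> (forall n, T (u n) = v) -> v = T f.
Proof.
move=> cu cf uf Tu; apply/eqP; rewrite -subr_eq0; apply/eqP.
apply: dual_separates => phi phi_dual; rewrite dual_functionalB //.
have := Tseq cu cf uf phi_dual.
have -> : phi \o (T \o u) = fun=> phi v by apply/funext => n /=; rewrite Tu.
by move/(cvg_unique (@norm_hausdorff _ _) (cvg_cst _)) => ->; rewrite subrr.
Qed.

Lemma T_excess_neq0 p : continuous p -> (forall x, 0 <= p x) -> T p != 0 ->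
  \forall n \near \oo, T (excess n.+1%:R^-1 p) != 0.
Proof.
move=> cp p_ge0 Tp; have [phi [phi_dual _ phiTp]] := norming_functional (T p).
have excess_cvg : {ptws, (fun n => excess n.+1%:R^-1 p) @ \oo --> p}.
  apply: (@ptws_cvg_dist_le _ _ _ _ (fun=> 1)) => n x; rewrite /excess mul1r.
  set c := n.+1%:R^-1; have c_gt0 : 0 < c by rewrite invr_gt0.
  have [pc|pc] := leP (p x - c) 0; first by rewrite subr0 ger0_norm //; lra.
  by rewrite (_ : p x - (p x - c) = c) ?gtr0_norm //; lra.
have := Tseq (fun n => @excess_continuous _ _ n.+1%:R^-1 _ cp) cp excess_cvg phi_dual.
move=> /cvgr_neq0 /(_ _); rewrite phiTp normr_eq0 => /(_ Tp).
by apply: filterS => n /=; apply: contra_neq => ->; rewrite dual_functional0.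
Qed.

(* Rescale the [h n] so that a single functional [phi], nonzero on every
   [T (h n)], takes the value [1] on all of them; the rescaled sequence still
   tends to [0] pointwise. *)
Lemma T_eventually_zero_seq (h : nat -> X -> R) : (forall n, continuous (h n)) ->
  (forall x, \forall n \near \oo, h n x = 0) -> exists n, T (h n) = 0.
Proof.
move=> ch h_ev0; apply: contrapT => /forallNP Th.
have [phi [phi_dual phiTh]] :=
  @dual_functional_avoiding _ _ (T \o h) (fun n => introN eqP (Th n)).
pose g n x := (phi (T (h n)))^-1 * h n x.
have cg n : continuous (g n) by rewrite /g; solve_continuous.
have g_cvg0 : {ptws, g @ \oo --> fun=> 0}.
  apply: ptws_cvg_near_eq => x; apply: filterS (h_ev0 x) => n hn0.
  by rewrite /g hn0 mulr0.
have := Tseq cg (@cst_continuous X R 0) g_cvg0 phi_dual; rewrite T0 dual_functional0 //.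
have -> : phi \o (T \o g) = fun=> 1.
  by apply/funext => n /=; rewrite /g TZ // dual_functionalZ // mulVf //; exact: phiTh.
by move/(cvg_unique (@norm_hausdorff _ _) (cvg_cst _))/eqP; rewrite oner_eq0.
Qed.

Definition negligible S := forall h, continuous h -> supported_in S h -> T h = 0.

Definition finite_rank_on O := exists (n : nat) (v : 'I_n -> E),
  forall g, continuous g -> supported_in O g ->
  exists c : 'I_n -> R, T g = \sum_(i < n) c i *: v i.

Definition atomic O := forall U1 U2, U1 `<=` O -> U2 `<=` O ->
  (forall x, U1 x -> U2 x -> False) -> negligible U1 \/ negligible U2.

Lemma negligibleS S U : U `<=` S -> negligible S -> negligible U.
Proof. by move=> US nS h ch Uh; apply: nS => // x Sx; apply: Uh => /US. Qed.

Lemma not_negligibleP S : ~ negligible S ->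
  exists h, [/\ continuous h, supported_in S h & T h != 0].
Proof.
move=> nS; apply: contrapT => noh; apply: nS => h ch Sh.
by apply/eqP; apply: contrapT => Th; apply: noh; exists h; split => //; exact/negP.
Qed.

(* Either the positive or the negative part of [h] is not killed by [T]. *)
Lemma not_negligible_nonneg S : ~ negligible S ->
  exists p, [/\ continuous p, (forall x, 0 <= p x), supported_in S p & T p != 0].
Proof.
move=> /not_negligibleP [h [ch Sh Th]].
pose hp x := Num.max (h x) 0; pose hn x := Num.max (- h x) 0.
have chp : continuous hp by rewrite /hp; solve_continuous.
have chn : continuous hn by rewrite /hn; solve_continuous.
have [Thp|Thp] := eqVneq (T hp) 0; last first.
  by exists hp; split => // [x|x Sx]; rewrite /hp ?le_max ?lexx ?orbT // Sh ?maxxx.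
have [Thn|Thn] := eqVneq (T hn) 0; last first.
  by exists hn; split => // [x|x Sx]; rewrite /hn ?le_max ?lexx ?orbT // Sh ?oppr0 ?maxxx.
suff : h = fun x => hp x - hn x by move=> hE; rewrite hE TB // Thp Thn subrr eqxx in Th.
apply/funext => x; rewrite /hp /hn; have [hx|hx] := leP (h x) 0.
  by rewrite max_l ?oppr_ge0 // sub0r opprK.
by rewrite max_r ?subr0 // oppr_le0 ltW.
Qed.

(* Otherwise the sets [|g| > M] carry functions [h M] with [T (h M) != 0],
   and [h M x = 0] as soon as [M >= |g x|]. *)
Lemma negligible_large_values g : continuous g ->
  exists M : nat, negligible [set x | M%:R < `|g x|].
Proof.
move=> cg; apply: contrapT => /forallNP nM.
have /choice [h hP] := fun M => not_negligibleP (nM M).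
have ch n : continuous (h n) by case: (hP n).
have [|n] := T_eventually_zero_seq ch; last by apply/eqP; case: (hP n).
move=> x; exists (Num.bound `|g x|) => // n /= bn; case: (hP n) => _ + _; apply => /=.
have := archi_boundP (normr_ge0 (g x)).
have : ((Num.bound `|g x|)%:R <= n%:R :> R) by rewrite ler_nat.
lra.
Qed.

Section AtomicSupport.
Variables (O : set X) (p : X -> R) (a0 : R).
Hypotheses (cp : continuous p) (p_ge0 : forall x, 0 <= p x) (Op : supported_in O p)
  (a0_gt0 : 0 < a0) (p_small_negligible : negligible [set x | O x /\ p x < a0]).

Definition above g c := [set x | O x /\ c * p x < g x].
Definition below g c := [set x | O x /\ g x < c * p x].

Lemma aboveS g c c' : c' <= c -> above g c `<=` above g c'.
Proof. by move=> c'c x [Ox gx]; split => //; apply: le_lt_trans gx; rewrite ler_wpM2r. Qed.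

Lemma belowS g c c' : c <= c' -> below g c `<=` below g c'.
Proof. by move=> cc' x [Ox gx]; split => //; apply: lt_le_trans gx _; rewrite ler_wpM2r. Qed.

Lemma below_aboveN g c : below g c `<=` above (fun x => - g x) (- c).
Proof. by move=> x [Ox gx]; split => //; rewrite mulNr ltrN2. Qed.

(* Cut [h] by a continuous [u] equal to [0] where [p <= a0 / 2] and to [1]
   where [p >= a0]: [h u] lives where [g > 2K/a0 p >= K], and [h (1 - u)]
   where [p < a0]. *)
Lemma negligible_above g (K : R) : 0 <= K -> continuous g ->
  negligible [set x | K < `|g x|] -> negligible (above g (2 * K / a0)).
Proof.
move=> K_ge0 cg gK_negl h ch hsupp.
pose u x := clamp01 (2 / a0 * p x - 1).
have cu : continuous u by rewrite /u; solve_continuous.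
have -> : h = fun x => h x * u x + h x * (1 - u x).
  by apply/funext => x; rewrite mulrBr mulr1 addrC subrK.
have Thu : T (fun x => h x * u x) = 0.
  apply: gK_negl => [|x /= gx]; first by solve_continuous.
  have [->|hx] := eqVneq (h x) 0; first by rewrite mul0r.
  have [Ox Kg] := supported_inP hsupp hx.
  suff pa : 2 / a0 * p x - 1 <= 0 by rewrite /u clamp01_le0 ?mulr0.
  rewrite leNgt; apply/negP => pa.
  have : 0 <= K * (2 / a0 * p x - 1) by apply: mulr_ge0 => //; lra.
  by have := ler_norm (g x); move/negP: gx; rewrite -leNgt; lra.
have Thu' : T (fun x => h x * (1 - u x)) = 0.
  apply: p_small_negligible => [|x /= px]; first by solve_continuous.
  have [->|hx] := eqVneq (h x) 0; first by rewrite mul0r.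
  have [Ox _] := supported_inP hsupp hx.
  have /negP : ~ (p x < a0) by move=> pa; apply: px; split.
  rewrite -leNgt => a0p; have pa : 1 <= p x / a0 by rewrite ler_pdivlMr // mul1r.
  by rewrite /u clamp01_ge1 ?subrr ?mulr0 // mulrAC -mulrA; lra.
by rewrite TD ?Thu ?Thu' ?addr0 //; solve_continuous.
Qed.

(* Clipping [k := g - c p] to the band [|k| <= p / n.+1] changes it only on
   [above g (c + 1/n.+1)] and [below g (c - 1/n.+1)], so [T k] is the [T] of
   functions tending to [0] pointwise. *)
Lemma T_eq_ratio g c : continuous g -> supported_in O g ->
  (forall d, 0 < d -> negligible (above g (c + d)) /\ negligible (below g (c - d))) ->
  T g = c *: T p.
Proof.
move=> cg Og gc; pose k x := g x - c * p x.
have ck : continuous k by rewrite /k; solve_continuous.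
pose d n : R := n.+1%:R^-1; have d_gt0 n : 0 < d n by rewrite invr_gt0.
have dp_ge0 n x : 0 <= d n * p x by apply: mulr_ge0; [exact: ltW | exact: p_ge0].
pose r1 n x := Num.max (k x - d n * p x) 0.
pose r2 n x := Num.min (k x + d n * p x) 0.
have cr1 n : continuous (r1 n) by rewrite /r1; solve_continuous.
have cr2 n : continuous (r2 n) by rewrite /r2; solve_continuous.
have outside_O x : ~ O x -> k x = 0 by move=> Ox; rewrite /k Og // Op // mulr0 subr0.
have Tr1 n : T (r1 n) = 0.
  apply: (gc _ (d_gt0 n)).1 => // x gx; rewrite /r1 max_r //.
  have [Ox|Ox] := pselect (O x); last by rewrite outside_O // sub0r oppr_le0.
  have /negP : ~ ((c + d n) * p x < g x) by move=> gcx; apply: gx.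
  by rewrite -leNgt /k; lra.
have Tr2 n : T (r2 n) = 0.
  apply: (gc _ (d_gt0 n)).2 => // x gx; rewrite /r2 min_r //.
  have [Ox|Ox] := pselect (O x); last by rewrite outside_O // add0r.
  have /negP : ~ (g x < (c - d n) * p x) by move=> gcx; apply: gx.
  by rewrite -leNgt /k; lra.
pose kd n x := k x - r1 n x - r2 n x.
have ckd n : continuous (kd n) by rewrite /kd; solve_continuous.
have Tkd n : T (kd n) = T k by rewrite /kd !TB ?Tr1 ?Tr2 ?subr0 //; solve_continuous.
have kd_cvg0 : {ptws, kd @ \oo --> fun=> 0}.
  apply: (@ptws_cvg_dist_le _ _ _ _ p) => n x; rewrite /kd /r1 /r2 sub0r normrN.
  rewrite -[p x / _]/(p x * d n) [p x * d n]mulrC; have := dp_ge0 n x.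
  have [h1|h1] := leP (k x - d n * p x) 0; have [h2|h2] := leP 0 (k x + d n * p x);
    by rewrite ler_norml => dp; apply/andP; split; lra.
have := T_ptws_cvg_cst ckd (@cst_continuous X R 0) kd_cvg0 Tkd.
by rewrite T0 /k TB ?TZ //; [move/eqP; rewrite subr_eq0 => /eqP | solve_continuous].
Qed.

Hypothesis O_atomic : atomic O.

(* [c] is the supremum of the [c'] for which [above g c'] is not negligible;
   atomicity makes [below g c'] negligible for every [c' < c]. *)
Lemma atomic_ratio g : continuous g -> supported_in O g ->
  exists c, forall d, 0 < d -> negligible (above g (c + d)) /\ negligible (below g (c - d)).
Proof.
move=> cg Og; have [M gM] := negligible_large_values cg.
have K_ge0 : 0 <= M%:R :> R by rewrite ler0n.
set k := 2 * M%:R / a0.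
have above_k : negligible (above g k) := negligible_above K_ge0 cg gM.
have below_k : negligible (below g (- k)).
  apply: negligibleS (@below_aboveN g (- k)) _; rewrite opprK.
  apply: negligible_above => //; first by solve_continuous.
  by apply: negligibleS gM => x /=; rewrite normrN.
pose B := [set c | ~ negligible (above g c)].
have [[c0 Bc0]|B0] := pselect (B !=set0); last first.
  exists (- k) => d d_gt0; split.
    by apply: contrapT => nd; apply: B0; exists (- k + d).
  by apply: negligibleS below_k; apply: belowS; lra.
have B_le c : B c -> c <= k.
  move=> Bc; rewrite leNgt; apply/negP => kc; apply: Bc.
  by apply: negligibleS above_k; apply: aboveS; exact: ltW.
have supB : has_sup B by split; [exists c0 | exists k => c /B_le].
exists (sup B) => d d_gt0; split.
  apply: contrapT => nd; have : sup B + d <= sup B by apply: ub_le_sup => //; case: supB.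
  lra.
have [b Bb bd] := sup_adherent d_gt0 supB.
have aboveO : above g b `<=` O by move=> x [].
have belowO : below g b `<=` O by move=> x [].
have disj x : above g b x -> below g b x -> False by move=> [_ gb] [_ bg]; lra.
have [//|nb] := O_atomic aboveO belowO disj.
by apply: negligibleS nb; apply: belowS; exact: ltW.
Qed.

End AtomicSupport.

(* A non-negligible nonnegative [p] can be cut at a level [a0] with
   [T (excess a0 p) != 0]; on an atom, [p < a0] is then negligible and every
   [g] is a multiple of [p] under [T]. *)
Lemma atomic_finite_rank O : atomic O -> finite_rank_on O.
Proof.
move=> O_atomic; have [nO|O0] := pselect (negligible O); last first.
  have [p [cp p_ge0 Op Tp]] := not_negligible_nonneg O0.
  have [n Tn] := filter_ex (T_excess_neq0 cp p_ge0 Tp).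
  set a0 : R := n.+1%:R^-1 in Tn; have a0_gt0 : 0 < a0 by rewrite invr_gt0.
  have small_negl : negligible [set x | O x /\ p x < a0].
    have smallO : [set x | O x /\ p x < a0] `<=` O by move=> x [].
    have largeO : [set x | a0 < p x] `<=` O.
      by move=> x /= pa; apply: (supported_inP Op); rewrite gt_eqF // (lt_trans a0_gt0).
    have disj x : (O x /\ p x < a0) -> a0 < p x -> False by move=> [_ pa] ap; lra.
    have [//|large_negl] := O_atomic _ _ smallO largeO disj.
    case/eqP: Tn; apply: large_negl; [exact: excess_continuous | exact: excess_supported].
  exists 1%N, (fun=> T p) => g cg Og.
  have [c gc] := atomic_ratio cp p_ge0 a0_gt0 small_negl O_atomic cg Og.
  by exists (fun=> c); rewrite big_ord1 (T_eq_ratio cp p_ge0 Op cg Og gc).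
exists 0%N, (fun=> 0) => g cg Og; exists (fun=> 0).
by rewrite big_ord0; exact: nO.
Qed.

Lemma finite_rank_on_cover O O1 O2 :
  (forall g, continuous g -> supported_in O g -> exists g1 g2,
    [/\ continuous g1, continuous g2, supported_in O1 g1, supported_in O2 g2
      & T g = T g1 + T g2]) ->
  finite_rank_on O1 -> finite_rank_on O2 -> finite_rank_on O.
Proof.
move=> Osplit [n1 [v1 Ov1]] [n2 [v2 Ov2]].
pose glue (A : Type) (a1 : 'I_n1 -> A) (a2 : 'I_n2 -> A) (i : 'I_(n1 + n2)) :=
  match fintype.split i with inl j => a1 j | inr k => a2 k end.
exists (n1 + n2)%N, (glue _ v1 v2) => g cg Og.
have [g1 [g2 [cg1 cg2 Og1 Og2 ->]]] := Osplit g cg Og.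
have [[c1 ->] [c2 ->]] := (Ov1 g1 cg1 Og1, Ov2 g2 cg2 Og2).
exists (glue _ c1 c2); rewrite big_split_ord /=; congr (_ + _); apply: eq_bigr => i _.
  by rewrite /glue -[lshift _ _]/(unsplit (inl i)) unsplitK.
by rewrite /glue -[rshift _ _]/(unsplit (inr i)) unsplitK.
Qed.

Lemma T_split_by_level O f1 f2 (a : R) g : continuous f1 -> continuous f2 -> 0 < a ->
  continuous g -> supported_in O g -> exists g1 g2,
  [/\ continuous g1, continuous g2, supported_in [set x | O x /\ f1 x - f2 x < a] g1,
      supported_in [set x | O x /\ f2 x - f1 x < a] g2 & T g = T g1 + T g2].
Proof.
move=> cf1 cf2 a_gt0 cg Og.
pose u x := clamp01 ((f1 x - f2 x + a) / (a + a)).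
have cu : continuous u by rewrite /u; solve_continuous.
have aa_gt0 : 0 < a + a by rewrite addr_gt0.
exists (fun x => g x * (1 - u x)), (fun x => g x * u x); split; try solve_continuous.
- move=> x /= Ox; have [Ox'|nOx] := pselect (O x); last by rewrite Og // mul0r.
  have /negP : ~ (f1 x - f2 x < a) by move=> fa; apply: Ox.
  rewrite -leNgt => af; rewrite /u clamp01_ge1 ?subrr ?mulr0 //.
  by rewrite ler_pdivlMr // mul1r; lra.
- move=> x /= Ox; have [Ox'|nOx] := pselect (O x); last by rewrite Og // mul0r.
  have /negP : ~ (f2 x - f1 x < a) by move=> fa; apply: Ox.
  rewrite -leNgt => af; rewrite /u clamp01_le0 ?mulr0 //.
  by rewrite pmulr_lle0 ?invr_gt0 //; lra.
- rewrite -TD; try solve_continuous.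
  by congr T; apply/funext => x; rewrite mulrBr mulr1 subrK.
Qed.

Lemma excess_disjoint O U1 U2 p1 p2 (a : R) : 0 < a -> U1 `<=` O ->
  (forall x, U1 x -> U2 x -> False) -> supported_in U1 p1 -> supported_in U2 p2 ->
  [set x | a < p1 x] `<=` O /\
  forall x, a < p1 x -> ~ (O x /\ p1 x - p2 x < a / 2).
Proof.
move=> a_gt0 U1O U12 U1p1 U2p2.
have U1a x : a < p1 x -> U1 x.
  by move=> ap; apply: (supported_inP U1p1); rewrite gt_eqF // (lt_trans a_gt0).
split => [x /U1a/U1O //|x ap [_]].
rewrite U2p2 => [|U2x]; last exact: U12 x (U1a x ap) U2x.
by rewrite subr0; lra.
Qed.

(* A non-atomic [O] contains disjoint non-negligible [U1], [U2] carrying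
   [p1, p2 >= 0].  One of the overlapping pieces [p1 - p2 < a/2] and
   [p2 - p1 < a/2] of [O] has infinite rank, and [excess a p1] (resp.
   [excess a p2]) is supported off the first (resp. second) piece. *)
Lemma not_finite_rank_split O : ~ finite_rank_on O -> exists O' k S,
  [/\ ~ finite_rank_on O', O' `<=` O, S `<=` O, (forall x, S x -> ~ O' x)
    & [/\ continuous k, supported_in S k & T k != 0]].
Proof.
move=> nfO.
have [U1 [U2 [U1O U2O U12 nU1 nU2]]] : exists U1 U2, [/\ U1 `<=` O, U2 `<=` O,
    (forall x, U1 x -> U2 x -> False), ~ negligible U1 & ~ negligible U2].
  apply: contrapT => nU; apply/nfO/atomic_finite_rank => U1 U2 U1O U2O U12.
  apply: contrapT => /not_orP [nU1 nU2]; exact: nU (ex_intro _ U1 (ex_intro _ U2 _)).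
have [p1 [cp1 p1_ge0 U1p1 Tp1]] := not_negligible_nonneg nU1.
have [p2 [cp2 p2_ge0 U2p2 Tp2]] := not_negligible_nonneg nU2.
have [n [T1 T2]] := filter_ex (filterI (T_excess_neq0 cp1 p1_ge0 Tp1)
                                       (T_excess_neq0 cp2 p2_ge0 Tp2)).
set a : R := n.+1%:R^-1 in T1 T2; have a_gt0 : 0 < a by rewrite invr_gt0.
have U21 x : U2 x -> U1 x -> False by move=> U2x /U12; apply.
have [nQ|nQ] : ~ finite_rank_on [set x | O x /\ p1 x - p2 x < a / 2] \/
               ~ finite_rank_on [set x | O x /\ p2 x - p1 x < a / 2].
- apply: contrapT => /not_orP [/contrapT fQ1 /contrapT fQ2]; apply/nfO.
  by apply: finite_rank_on_cover fQ1 fQ2 => g; apply: T_split_by_level; rewrite ?divr_gt0.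
- have [aO adisj] := excess_disjoint a_gt0 U1O U12 U1p1 U2p2.
  exists [set x | O x /\ p1 x - p2 x < a / 2], (excess a p1), [set x | a < p1 x].
  by split => //; [move=> x [] | split; [exact: excess_continuous | exact: excess_supported |]].
- have [aO adisj] := excess_disjoint a_gt0 U2O U21 U2p2 U1p1.
  exists [set x | O x /\ p2 x - p1 x < a / 2], (excess a p2), [set x | a < p2 x].
  by split => //; [move=> x [] | split; [exact: excess_continuous | exact: excess_supported |]].
Qed.

Lemma finite_rank_on_setT : finite_rank_on setT.
Proof.
apply: contrapT => nfT.
have /choice [F FP] : forall O, exists t : set X * (X -> R) * set X,
    ~ finite_rank_on O -> [/\ ~ finite_rank_on t.1.1, t.1.1 `<=` O, t.2 `<=` O,
      (forall x, t.2 x -> ~ t.1.1 x) & [/\ continuous t.1.2, supported_in t.2 t.1.2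
      & T t.1.2 != 0]].
  move=> O; have [fO|nfO] := pselect (finite_rank_on O); first by exists (set0, fun=> 0, set0).
  by have [Q [k [S P]]] := not_finite_rank_split nfO; exists (Q, k, S).
pose On n := iter n (fun O => (F O).1.1) setT.
have nfOn n : ~ finite_rank_on (On n) by elim: n => //= n IH; case: (FP _ IH).
pose k n := (F (On n)).1.2; pose S n := (F (On n)).2.
have ck n : continuous (k n) by case: (FP _ (nfOn n)) => _ _ _ _ [].
have [|n] := T_eventually_zero_seq ck; last first.
  by apply/eqP; case: (FP _ (nfOn n)) => _ _ _ _ [].
move=> x; apply: filterS (@nested_disjoint_eventually _ On S _ x) => [n Snx|n].
  by case: (FP _ (nfOn n)) => _ _ _ _ [_ + _]; apply.
by case: (FP _ (nfOn n)).
Qed.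

End SequentiallyContinuousOperator.

Theorem theorem1p5 (R : realType) (X : topologicalType)
  (E : completeNormedModType R) (hX : tychonoff_space X)
  (T : (X -> R) -> E)
  (Tlin : forall (a : R) (f g : X -> R), continuous f -> continuous g ->
            T (a *: f + g) = a *: T f + T g)
  (Tseq : forall (u : nat -> X -> R) (f : X -> R),
            (forall n, continuous (u n)) -> continuous f ->
            {ptws, u @ \oo --> f} -> weak_cvg (T \o u) (T f)) :
  exists (n : nat) (v : 'I_n -> E), forall f : X -> R, continuous f ->
    exists c : 'I_n -> R, T f = \sum_(i < n) c i *: v i.
Proof.
have [n [v Tv]] := finite_rank_on_setT Tlin Tseq.
by exists n, v => f cf; apply: Tv => // x [].
Qed.
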